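(* For every $r\ge1$, $C_{1,r}=\dfrac{(-1)^r}{r+1}$; equivalently \[ \sum_{\substack{(n_1,\dots,n_r)\in\mathbb Z_{\ge0}^r\\ n_1+\dots+n_r=r\\ n_{j+1}+\dots+n_r\le r-j\ (1\le j<r)}}\ \prod_{j=1}^r\frac{B_{n_j}}{n_j!}=\frac{1}{r+1}. \]
   Context: Bernoulli numbers $B_n$ are defined by $\sum_{n\ge0}B_n x^n/n! = xe^x/(e^x-1)$ (so $B_1=+1/2$). For a finite set $S\subset\mathbb Z_{\ge0}^r$, $C(S)=(-1)^r\sum_{(n_1,\dots,n_r)\in S}\prod_{j}B_{n_j}/n_j!$. For $1\le i\le r$, $C_{i,r}=C(S)$ where $S$ is the set of $(n_1,\dots,n_r)\in\mathbb Z_{\ge0}^r$ with $n_1+\dots+n_r=r$, $n_1+\dots+n_j<j$ for $1\le j<i$, and $n_{j+1}+\dots+n_r\le r-j$ for $i\le j<r$. (So $C_{1,r}$ is given by the set displayed in the claim.) *)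

From mathcomp Require Import all_boot all_order all_algebra.
Set Implicit Arguments. Unset Strict Implicit. Unset Printing Implicit Defensive.
Import Order.TTheory GRing.Theory Num.Theory.
Local Open Scope ring_scope.

(* Bernoulli numbers with B_1 = +1/2, defined by x e^x / (e^x - 1) = sum B_n x^n/n!.
   Equivalently x e^x = (e^x - 1) * sum_n B_n x^n/n!; comparing the coefficients
   of x^(n+1)/(n+1)! gives  sum_{k=0}^{n} C(n+1,k) B_k = n+1,  i.e.
   B_n = ((n+1) - sum_{k<n} C(n+1,k) B_k) / (n+1). *)
Fixpoint bern_list (n : nat) : seq rat :=
  match n with
  | 0 => [:: 1]
  | m.+1 =>
      let l := bern_list m in
      rcons l (((m.+2)%:R - \sum_(k < m.+1) ('C(m.+2, k))%:R * nth 0 l k) / (m.+2)%:R)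
  end.

Definition bernoulli (n : nat) : rat := nth 0 (bern_list n) n.

(* C(S) for a finite set S of r-tuples of naturals, given as a boolean predicate on
   tuples n : 'I_r -> nat; all tuples in the sets considered have coordinates <= r,
   so we enumerate over {ffun 'I_r -> 'I_r.+1}. *)
Definition C_of (r : nat) (S : {ffun 'I_r -> 'I_r.+1} -> bool) : rat :=
  (-1) ^+ r * \sum_(n : {ffun 'I_r -> 'I_r.+1} | S n)
     \prod_(j < r) (bernoulli (n j) / ((n j)`!)%:R).

(* partial sums with 1-based indices: n_1 + ... + n_j and n_{j+1} + ... + n_r *)
Definition pre_sum r (n : {ffun 'I_r -> 'I_r.+1}) (j : nat) : nat :=
  \sum_(k < r | (k < j)%N) (n k : nat).
Definition suf_sum r (n : {ffun 'I_r -> 'I_r.+1}) (j : nat) : nat :=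
  \sum_(k < r | (j <= k)%N) (n k : nat).

Definition S_set (i r : nat) (n : {ffun 'I_r -> 'I_r.+1}) : bool :=
  [&& (pre_sum n r == r)%N,
      [forall j : 'I_r, ((1 <= j) && (j < i))%N ==> (pre_sum n j < j)%N] &
      [forall j : 'I_r, ((i <= j) && (1 <= j))%N ==> (suf_sum n j <= r - j)%N]].

Definition C_ir (i r : nat) : rat := C_of (@S_set i r).

From mathcomp Require Import all_boot all_order all_algebra.
From mathcomp Require Import ring zify.
Set Implicit Arguments. Unset Strict Implicit. Unset Printing Implicit Defensive.
Import Order.TTheory GRing.Theory Num.Theory.
Local Open Scope ring_scope.

(* Let b(x) = sum_n B_n x^n/n! = x e^x/(e^x - 1).  It satisfies the Riccati
   equation x b' = b + x b - b^2, and differentiating b^(m+1) along it shows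
   [x^m] b^(m+1) = 1 for every m.  Splitting off the first coordinate of a
   tuple, the weighted number of k-tuples with sum s and n_(j+1)+...+n_k <= k-j
   for all j is (k+1-s)/(k+1) [x^s] b^(k+1), a generating-function form of the
   cycle lemma; for k = s = r this is 1/(r+1).  Power series are handled as
   polynomials truncated above the degrees involved. *)

Lemma fact_neq0 m : m`!%:R != 0 :> rat.
Proof. by rewrite pnatr_eq0 -lt0n fact_gt0. Qed.

Lemma size_bern_list n : size (bern_list n) = n.+1.
Proof. by elim: n => [|n IH] //=; rewrite size_rcons IH. Qed.

Lemma nth_bern_list n k : (k <= n)%N -> nth 0 (bern_list n) k = bernoulli k.
Proof.
elim: n => [|n IH]; first by rewrite leqn0 => /eqP ->.
rewrite leq_eqVlt => /orP [/eqP -> //|lt_k_n].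
by rewrite /= nth_rcons size_bern_list lt_k_n IH.
Qed.

Lemma bernoulli_rec n : \sum_(k < n.+1) 'C(n.+1, k)%:R * bernoulli k = n.+1%:R.
Proof.
case: n => [|n]; first by rewrite big_ord1.
rewrite big_ord_recr /= binSn.
have -> : bernoulli n.+1 =
    (n.+2%:R - \sum_(k < n.+1) 'C(n.+2, k)%:R * bernoulli k) / n.+2%:R.
  rewrite /bernoulli /= nth_rcons size_bern_list ltnn eqxx.
  congr (_ / _); congr (_ - _); apply: eq_bigr => k _.
  by rewrite nth_bern_list // -ltnS.
by field; rewrite -(natrD _ 2 n) pnatr_eq0.
Qed.

Definition bern_coef n : rat := bernoulli n / n`!%:R.

Lemma bern_coef0 : bern_coef 0 = 1.
Proof. by rewrite /bern_coef /bernoulli /= divr1. Qed.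

(* The coefficient of x^(n+1) in b(x) (e^x - 1) = x e^x. *)
Lemma bern_coef_conv n :
  \sum_(k < n.+1) bern_coef k / (n.+1 - k)`!%:R = 1 / n`!%:R.
Proof.
have -> : \sum_(k < n.+1) bern_coef k / (n.+1 - k)`!%:R =
          (\sum_(k < n.+1) 'C(n.+1, k)%:R * bernoulli k) / (n.+1)`!%:R.
  rewrite mulr_suml; apply: eq_bigr => k _.
  rewrite -(bin_fact (ltnW (ltn_ord k))) !natrM /bern_coef.
  by field; rewrite !fact_neq0 pnatr_eq0 -lt0n bin_gt0 ltnW.
rewrite bernoulli_rec factS natrM.
by field; rewrite fact_neq0 -(natrD _ 1 n) pnatr_eq0.
Qed.

Section VanishBelow.
Variable R : nzRingType.
Implicit Types p q u : {poly R}.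

Definition vanish_below N p := forall i, (i < N)%N -> p`_i = 0.

Lemma coef_XM_deriv p t : ('X * p^`())`_t = p`_t *+ t.
Proof. by rewrite coefXM; case: t => [|t] //=; rewrite ?mulr0n // coef_deriv. Qed.

Variable N : nat.

Lemma vanish_belowD p q :
  vanish_below N p -> vanish_below N q -> vanish_below N (p + q).
Proof. by move=> vp vq i lt_i; rewrite coefD vp // vq // addr0. Qed.

Lemma vanish_belowB p q :
  vanish_below N p -> vanish_below N q -> vanish_below N (p - q).
Proof. by move=> vp vq i lt_i; rewrite coefB vp // vq // subr0. Qed.

Lemma vanish_belowMl q p : vanish_below N p -> vanish_below N (q * p).
Proof.
move=> vp i lt_i; rewrite coefM big1 // => j _.
by rewrite vp ?mulr0 // (leq_ltn_trans (leq_subr _ _) lt_i).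
Qed.

Lemma vanish_belowMn p n : vanish_below N p -> vanish_below N (p *+ n).
Proof. by move=> vp i lt_i; rewrite coefMn vp // mul0rn. Qed.

Lemma vanish_below_deriv p : vanish_below N.+1 p -> vanish_below N p^`().
Proof. by move=> vp i lt_i; rewrite coef_deriv vp // mul0rn. Qed.

Lemma vanish_belowXM p : vanish_below N p -> vanish_below N.+1 ('X * p).
Proof. by move=> vp [|i] lt_i; rewrite coefXM //= vp. Qed.

Lemma vanish_belowXMK p : vanish_below N.+1 ('X * p) -> vanish_below N p.
Proof. by move=> vp i lt_i; have := vp i.+1 lt_i; rewrite coefXM. Qed.

Lemma vanish_below_cancel u p :
  u`_0 = 1 -> vanish_below N (u * p) -> vanish_below N p.
Proof.
move=> u0 vup i; elim/ltn_ind: i => i IH lt_i.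
have := vup i lt_i; rewrite coefMr big_ord_recr /= subnn u0 mul1r.
by rewrite big1 ?add0r // => j _; rewrite IH ?mulr0 // (ltn_trans _ lt_i).
Qed.

End VanishBelow.

Definition riccati (p : {poly rat}) := 'X * p^`() - p - 'X * p + p * p.

Section RiccatiPowers.
Variables (p : {poly rat}) (K : nat).
Hypothesis p_riccati : vanish_below K (riccati p).

Lemma riccati_deriv_exp m :
  vanish_below K ('X * (p ^+ m.+1)^`() - (p ^+ m.+1 * (1 + 'X - p)) *+ m.+1).
Proof.
have -> : 'X * (p ^+ m.+1)^`() - (p ^+ m.+1 * (1 + 'X - p)) *+ m.+1 =
          (p ^+ m * riccati p) *+ m.+1.
  by rewrite deriv_exp /= exprS /riccati; move: (p ^+ m) (p^`()) => c dp; ring.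
exact/vanish_belowMn/vanish_belowMl.
Qed.

Lemma riccati_coef_exp m : (m.+1 < K)%N ->
  (p ^+ m.+2)`_m.+1 = (p ^+ m.+1)`_m.
Proof.
move=> lt_m_K; have /(_ m.+1 lt_m_K) := riccati_deriv_exp m.
rewrite coefD coefN coef_XM_deriv coefMn mulrBr mulrDr mulr1 coefB coefD.
rewrite coefMX /= -exprSr.
move: (p ^+ m.+1)`_m.+1 (p ^+ m.+1)`_m (p ^+ m.+2)`_m.+1 => c1 c0 c2 eq0.
have : (c2 - c0) *+ m.+1 = 0 by rewrite -eq0; ring.
by move/eqP; rewrite mulrn_eq0 /= subr_eq0 => /eqP.
Qed.

Lemma riccati_coef_diag m : p`_0 = 1 -> (m < K)%N -> (p ^+ m.+1)`_m = 1.
Proof.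
move=> p0; elim: m => [|m IH] lt_m_K; first by rewrite expr1.
by rewrite riccati_coef_exp // IH // ltnW.
Qed.

End RiccatiPowers.

Definition bern_poly N : {poly rat} := \poly_(i < N) bern_coef i.
Definition expm1_poly N : {poly rat} :=
  \poly_(i < N) (if i == 0%N then 0 else 1 / i`!%:R).
Definition expm1_divX_poly N : {poly rat} := \poly_(i < N) (1 / i.+1`!%:R).

Lemma expm1_polyS N : expm1_poly N.+1 = 'X * expm1_divX_poly N.
Proof. by apply/polyP => -[|i]; rewrite coefXM !coef_poly //= ltnS. Qed.

Section BernoulliRiccati.
Variable N : nat.
Local Notation b := (bern_poly N.+2).
Local Notation e := (expm1_poly N.+2).

Lemma expm1_poly_deriv : vanish_below N.+1 (e^`() - (e + 1)).
Proof.
move=> i lt_i_N; rewrite coefB coefD coef_deriv coef1 !coef_poly /=.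
rewrite ltnS lt_i_N ltnS (ltnW lt_i_N).
case: i lt_i_N => [|i] _ /=; first by rewrite mulr1n add0r subrr.
rewrite -mulr_natr factS natrM mul1r.
by field; rewrite fact_neq0 -(natrD _ 2 i) pnatr_eq0.
Qed.

Lemma bern_poly_mul_expm1 : vanish_below N.+2 (b * e - 'X * (e + 1)).
Proof.
move=> [|m] lt_m_N; rewrite coefB coefXM /=.
  by rewrite coefM big_ord1 !coef_poly /= mulr0 subr0.
have e0 : e`_0 = 0 by rewrite coef_poly.
rewrite coefM big_ord_recr /= subnn e0 mulr0 addr0.
rewrite coefD coef1 !coef_poly (ltnW lt_m_N).
have -> : (if m == 0%N then 0 else 1 / m`!%:R) + (m == 0%N)%:R = 1 / m`!%:R :> rat.
  by case: m {lt_m_N} => [|m] /=; rewrite ?addr0 ?add0r // divr1.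
rewrite -bern_coef_conv; apply/eqP; rewrite subr_eq0; apply/eqP/eq_bigr => j _.
rewrite !coef_poly (leq_ltn_trans (leq_subr _ _) lt_m_N).
rewrite (ltn_trans (ltn_ord j) lt_m_N) subn_eq0 leqNgt ltn_ord /=.
by rewrite mul1r.
Qed.

(* With H = b e - x (e + 1):  e * riccati b = x (H' - (b - x) (e' - (e + 1)))
   + (b - 1 - x) H, and e = x (1 + x/2 + ...) can be cancelled. *)
Lemma bern_poly_riccati : vanish_below N.+1 (riccati b).
Proof.
have eR : e * riccati b = 'X * ((b * e - 'X * (e + 1))^`() -
      (b - 'X) * (e^`() - (e + 1))) + (b - 1 - 'X) * (b * e - 'X * (e + 1)).
  rewrite !derivE mul1r addr0 /riccati.
  by move: b e b^`() e^`() 'X => B E dB dE X; ring.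
have : vanish_below N.+2 (e * riccati b).
  rewrite eR; apply: vanish_belowD; last exact/vanish_belowMl/bern_poly_mul_expm1.
  apply/vanish_belowXM/vanish_belowB.
    exact/vanish_below_deriv/bern_poly_mul_expm1.
  exact/vanish_belowMl/expm1_poly_deriv.
rewrite expm1_polyS -mulrA => /vanish_belowXMK; apply: vanish_below_cancel.
by rewrite coef_poly /= divr1.
Qed.

End BernoulliRiccati.

Section FfunCons.
Variable T : finType.

Definition ffun_cons k (x : T) (g : {ffun 'I_k -> T}) : {ffun 'I_k.+1 -> T} :=
  [ffun i => if unlift ord0 i is Some j then g j else x].

Lemma ffun_cons0 k x (g : {ffun 'I_k -> T}) : ffun_cons x g ord0 = x.
Proof. by rewrite ffunE unlift_none. Qed.

Lemma ffun_consS k x (g : {ffun 'I_k -> T}) j : ffun_cons x g (lift ord0 j) = g j.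
Proof. by rewrite ffunE liftK. Qed.

Lemma big_ffun_cons k (P : pred {ffun 'I_k.+1 -> T}) (F : {ffun 'I_k.+1 -> T} -> rat) :
  \sum_(f | P f) F f =
  \sum_(xg : T * {ffun 'I_k -> T} | P (ffun_cons xg.1 xg.2)) F (ffun_cons xg.1 xg.2).
Proof.
rewrite (reindex (fun xg : T * {ffun 'I_k -> T} => ffun_cons xg.1 xg.2)) //.
exists (fun f : {ffun 'I_k.+1 -> T} => (f ord0, [ffun j => f (lift ord0 j)])) => [[x g] _ | f _] /=.
  by rewrite ffun_cons0; congr pair; apply/ffunP => j; rewrite ffunE ffun_consS.
apply/ffunP => i; case: (unliftP ord0 i) => [j ->|->].
  by rewrite ffun_consS ffunE.
by rewrite ffun_cons0.
Qed.

End FfunCons.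

Section Ballot.
Variables (w : nat -> rat) (M : nat).
Hypothesis w0 : w 0 = 1.
Local Notation T := 'I_M.+1.
Local Notation b := (\poly_(i < M.+2) w i).

Definition tuple_sum k (g : {ffun 'I_k -> T}) : nat := \sum_(i < k) (g i : nat).

Definition tail_sum k (g : {ffun 'I_k -> T}) (j : nat) : nat :=
  \sum_(i < k | (j <= i)%N) (g i : nat).

Definition ballot k (g : {ffun 'I_k -> T}) : bool :=
  [forall j : 'I_k, (tail_sum g j <= k - j)%N].

Definition ballot_weight k t : rat :=
  \sum_(g : {ffun 'I_k -> T} | ballot g && (tuple_sum g == t)) \prod_(i < k) w (g i).

Lemma tail_sum0 k (g : {ffun 'I_k -> T}) : tail_sum g 0 = tuple_sum g.
Proof. exact: eq_bigl. Qed.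

Lemma tuple_sum_cons k x (g : {ffun 'I_k -> T}) :
  tuple_sum (ffun_cons x g) = (x + tuple_sum g)%N.
Proof.
rewrite /tuple_sum big_ord_recl ffun_cons0; congr addn.
by apply: eq_bigr => i _; rewrite ffun_consS.
Qed.

Lemma tail_sum_consS k x (g : {ffun 'I_k -> T}) j :
  tail_sum (ffun_cons x g) j.+1 = tail_sum g j.
Proof.
rewrite /tail_sum big_mkcond big_ord_recl /= add0n [RHS]big_mkcond.
by apply: eq_bigr => i _; rewrite /bump leq0n add1n ltnS ffun_consS.
Qed.

Lemma ballot_cons k x (g : {ffun 'I_k -> T}) :
  ballot (ffun_cons x g) = (x + tuple_sum g <= k.+1)%N && ballot g.
Proof.
apply/forallP/andP => [ballot_xg|[le_xg_k /forallP ballot_g] j].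
  split; first by have := ballot_xg ord0; rewrite tail_sum0 tuple_sum_cons.
  by apply/forallP => j; have := ballot_xg (lift ord0 j); rewrite lift0 tail_sum_consS.
case: (unliftP ord0 j) => [j' ->|->]; last by rewrite tail_sum0 tuple_sum_cons.
by rewrite lift0 tail_sum_consS subSS.
Qed.

Lemma ballot_sum_le k (g : {ffun 'I_k -> T}) : ballot g -> (tuple_sum g <= k)%N.
Proof.
case: k g => [|k] g; first by rewrite /tuple_sum big_ord0.
by move/forallP/(_ ord0); rewrite tail_sum0.
Qed.

Lemma ballot_weight0 t : ballot_weight 0 t = (t == 0%N)%:R.
Proof.
have tuple_sum0 (g : {ffun 'I_0 -> T}) : tuple_sum g = 0%N by rewrite /tuple_sum big_ord0.
have ballot0 (g : {ffun 'I_0 -> T}) : ballot g by apply/forallP => -[].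
rewrite /ballot_weight; case: t => [|t]; last first.
  by rewrite big1 // => g; rewrite tuple_sum0 andbF.
rewrite (eq_bigl predT) => [|g]; last by rewrite ballot0 tuple_sum0.
rewrite (eq_bigr (fun _ => 1)) => [|g _]; last by rewrite big_ord0.
by rewrite sumr_const card_ffun !card_ord expn0.
Qed.

Lemma ballot_weight_cons k t : (t <= k.+1)%N -> (t <= M)%N ->
  ballot_weight k.+1 t = \sum_(x < t.+1) w x * ballot_weight k (t - x)%N.
Proof.
move=> le_t_k le_t_M; rewrite /ballot_weight big_ffun_cons.
rewrite (eq_bigl (fun xg : T * {ffun 'I_k -> T} =>
  (xg.1 <= t)%N && (ballot xg.2 && (tuple_sum xg.2 == t - xg.1)%N))); last first.
  move=> [x g] /=; rewrite ballot_cons tuple_sum_cons.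
  case: (ballot g); rewrite ?andbT ?andbF //=.
  by apply/andP/andP => -[le_x /eqP eq_x]; split; try apply/eqP; lia.
rewrite (eq_bigr (fun xg : T * {ffun 'I_k -> T} => w xg.1 * \prod_(i < k) w (xg.2 i))); last first.
  move=> [x g] _; rewrite big_ord_recl ffun_cons0; congr (_ * _).
  by apply: eq_bigr => i _; rewrite ffun_consS.
rewrite -(pair_big_dep (fun x : T => (x <= t)%N)
   (fun x g => ballot g && (tuple_sum g == t - x)%N) (fun x g => w x * \prod_(i < k) w (g i))).
under eq_bigr => x _ do rewrite -big_distrr.
rewrite -(big_mkord (fun x => (x <= t)%N) (fun x => w x * ballot_weight k (t - x)%N)).
rewrite -(big_mkord xpredT (fun x => w x * ballot_weight k (t - x)%N)).
by rewrite [RHS](big_nat_widen _ _ M.+1) ?ltnS.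
Qed.

Definition ballot_poly n (p : {poly rat}) := p ^+ n *+ n - 'X * (p ^+ n)^`().

Lemma coef_ballot_poly n p s :
  (ballot_poly n p)`_s = (n%:R - s%:R) * (p ^+ n)`_s.
Proof. by rewrite coefB coefMn coef_XM_deriv mulrBl !mulr_natl. Qed.

Lemma ballot_polyS n p :
  (p * ballot_poly n.+1 p) *+ n.+2 = ballot_poly n.+2 p *+ n.+1.
Proof.
rewrite /ballot_poly !deriv_exp /= !exprS.
by move: (p ^+ n) p^`() => c dp; ring.
Qed.

Lemma ballot_weightE k s : (k <= M)%N -> (s <= k.+1)%N ->
  ballot_weight k s = (ballot_poly k.+1 b)`_s / k.+1%:R.
Proof.
elim: k s => [|k IH] s le_k_M le_s_k.
  rewrite ballot_weight0 coef_ballot_poly expr1 coef_poly divr1.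
  case: s le_s_k => [|[|s]] //= _; first by rewrite w0 subr0 mulr1.
  by rewrite subrr mul0r.
have [->|ne_s] := eqVneq s k.+2.
  rewrite coef_ballot_poly subrr !mul0r /ballot_weight big1 // => g.
  by case/andP=> /ballot_sum_le + /eqP eq_g; rewrite eq_g ltnn.
have le_s : (s <= k.+1)%N by rewrite -ltnS ltn_neqAle ne_s le_s_k.
have coef_b x : (x <= s)%N -> b`_x = w x.
  by move=> le_x; rewrite coef_poly ifT //; lia.
rewrite ballot_weight_cons ?(leq_trans le_s) //.
transitivity ((b * ballot_poly k.+1 b)`_s / k.+1%:R).
  rewrite coefM mulr_suml; apply: eq_bigr => x _.
  rewrite IH ?(ltnW le_k_M) ?(leq_trans (leq_subr _ _) le_s) // coef_b ?mulrA //.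
  by rewrite -ltnS.
have := congr1 (fun p : {poly rat} => p`_s) (ballot_polyS k b); rewrite /= !coefMn => eq_coef.
apply/eqP; rewrite eqr_div ?pnatr_eq0 //; apply/eqP.
by rewrite !mulr_natr.
Qed.

End Ballot.

Lemma S_set1E r (n : {ffun 'I_r -> 'I_r.+1}) :
  S_set 1 n = ballot n && (tuple_sum n == r).
Proof.
rewrite /S_set.
have -> : pre_sum n r = tuple_sum n by apply: eq_bigl => i; rewrite ltn_ord.
have -> : [forall j : 'I_r, (1 <= j < 1)%N ==> (pre_sum n j < j)%N].
  by apply/forallP => j; apply/implyP; lia.
apply/and3P/andP => [[/eqP sum_n _ /forallP tail_n]|[/forallP tail_n /eqP sum_n]].
  split; last by rewrite sum_n.
  apply/forallP => j; case: (posnP j) => [j0|j_gt0].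
    by rewrite j0 tail_sum0 sum_n subn0.
  by have := tail_n j; rewrite j_gt0.
by split; [rewrite sum_n | | apply/forallP => j; apply/implyP => _; exact: tail_n].
Qed.

Theorem lemma3p1 (r : nat) : (1 <= r)%N ->
  C_ir 1 r = (-1) ^+ r / (r.+1)%:R.
Proof.
move=> _.
have diag : ((bern_poly r.+2) ^+ r.+1)`_r = 1.
  apply: (riccati_coef_diag (@bern_poly_riccati r) _ (ltnSn r)).
  by rewrite coef_poly bern_coef0.
have -> : C_ir 1 r = (-1) ^+ r * ballot_weight bern_coef r r r.
  by rewrite /C_ir /C_of (eq_bigl _ _ (@S_set1E r)).
rewrite ballot_weightE ?bern_coef0 // coef_ballot_poly diag.
by rewrite -natrB // subSnn mulr1 mul1r.
Qed.
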